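(* Let $d\ge2$ and let $P$ be an essential pattern subgroup of $G(d)$ with $P(d-1)=G(d-1)$. Then $P$ contains $[a_1,a_{d-1}]$ and does not contain $[a_0,a_{d-1}]$ if and only if $[G(d):P]=4$.
   Context: Let $X=\{0,1\}$, $G(d)$ the automorphism group of the finite binary rooted tree of words of length $\le d$; finite sections $g(wv)=g(w)g_w(v)$; $\pi_k$ restriction to words of length $\le k$, $P(k)=\pi_k(P)$. A subgroup $P\le G(d)$ is an essential pattern group if for every $p\in P$ and $i\in\{0,1\}$ there is $q\in P$ with $\pi_{d-1}(q)=p_i$. For $0\le i\le d-1$, $a_i\in G(d)$ swaps $0^i0w$ with $0^i1w$ for all words $w$ and fixes all other words. $[h,k]=h^{-1}k^{-1}hk$. *)

From HB Require Import structures.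
From mathcomp Require Import all_boot all_fingroup.
Set Implicit Arguments. Unset Strict Implicit. Unset Printing Implicit Defensive.

(** Words over X = {0,1} are [seq bool] ([false] = 0, [true] = 1),
    read from left to right: [w ++ v] is the word wv. *)

Fixpoint words (d : nat) : seq (seq bool) :=
  if d is d'.+1 then
    [::] :: [seq b :: w | b <- [:: false; true], w <- words d']
  else [:: [::]].

Lemma nil_in_words d : [::] \in words d.
Proof. by case: d. Qed.

Lemma mem_cons_map (b c : bool) (s : seq bool) (l : seq (seq bool)) :
  (b :: s \in [seq c :: w | w <- l]) = (b == c) && (s \in l).
Proof.
elim: l => [|x l IH] /=; first by rewrite andbF.
by rewrite !in_cons IH andb_orr; congr (_ || _); rewrite eqseq_cons.
Qed.

Lemma mem_words d s : (s \in words d) = (size s <= d).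
Proof.
elim: d s => [|d IH] [|b s] //=.
rewrite in_cons /= !mem_cat orbF !mem_cons_map IH.
by case: b; rewrite /= ?orbF.
Qed.

(** The vertices of the finite binary rooted tree of depth d:
    the words of length <= d (a finite type). *)
Definition word (d : nat) : finType := seq_sub (words d).

Definition wroot (d : nat) : word d := SeqSub (nil_in_words d).

(** The word of length <= d with underlying sequence s (s is assumed to
    have length <= d; otherwise the root). *)
Definition mkw (d : nat) (s : seq bool) : word d := insubd (wroot d) s.

Definition wval d (w : word d) : seq bool := ssval w.

(** Parent of a vertex (the root is its own parent). *)
Definition wparent d (w : word d) : word d :=
  mkw d (take (size (wval w)).-1 (wval w)).

(** G(d): automorphisms of the rooted tree, i.e. permutations of the
    vertices commuting with the parent map (hence fixing the root and
    preserving edges). *)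
Definition G (d : nat) : {set {perm word d}} :=
  [set g : {perm word d} | [forall w, g (wparent w) == wparent (g w)]].

(** Restriction pi_k(g) to the words of length <= k (k <= d), as a map. *)
Definition restr (d k : nat) (g : {perm word d}) (w : word k) : word k :=
  mkw k (wval (g (mkw d (wval w)))).
Arguments restr {d} k g w.

Definition pattern (d : nat) (P : {set {perm word d}}) (k : nat)
  : {set {perm word k}} :=
  [set h : {perm word k} | [exists p in P, [forall w, h w == restr k p w]]].

(** The section g_x at a one-letter word x, as a map on words of length
    <= d-1:  g(x v) = g(x) g_x(v). *)
Definition section1 (d : nat) (g : {perm word d}) (x : bool)
  (v : word d.-1) : word d.-1 :=
  mkw d.-1 (drop 1 (wval (g (mkw d (x :: wval v))))).

Definition essential (d : nat) (P : {set {perm word d}}) : Prop :=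
  forall p, p \in P -> forall x : bool,
    exists2 q, q \in P & forall v : word d.-1, restr d.-1 q v = section1 p x v.

(** The map on sequences underlying a_i: swaps 0^i 0 w and 0^i 1 w. *)
Definition aseq (i : nat) (s : seq bool) : seq bool :=
  if (i < size s) && (take i s == nseq i false)
  then take i s ++ ~~ nth false s i :: drop i.+1 s
  else s.

Definition amap (d i : nat) (w : word d) : word d := mkw d (aseq i (wval w)).

Lemma size_aseq i s : size (aseq i s) = size s.
Proof.
rewrite /aseq; case: ifP => // /andP [Hi _].
by rewrite size_cat /= size_take Hi size_drop addnS -addSn subnKC.
Qed.

Lemma aseqK i : involutive (aseq i).
Proof.
move=> s; rewrite {2}/aseq; case: ifP => [/andP [Hi /eqP Ht]|H]; last by rewrite /aseq H.
have Hs : size (take i s) = i by rewrite size_take Hi.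
rewrite /aseq size_cat /= Hs take_size_cat // Ht eqxx andbT addnS ltnS leq_addr.
rewrite nth_cat size_nseq ltnn subnn /= negbK drop_cat size_nseq ltnNge leqnSn /=.
by rewrite subSnn /= drop0 -Ht -drop_nth // cat_take_drop.
Qed.

Lemma amapK d i : involutive (@amap d i).
Proof.
move=> w; apply: val_inj; rewrite /amap /mkw /wval /=.
have Hw : aseq i (ssval w) \in words d.
  by rewrite mem_words size_aseq -mem_words (ssvalP w).
rewrite (insubdK _ Hw) aseqK insubdK //; exact: ssvalP.
Qed.

Definition a (d i : nat) : {perm word d} := perm (can_inj (@amapK d i)).

From HB Require Import structures.
From mathcomp Require Import all_boot all_fingroup zify.
Set Implicit Arguments. Unset Strict Implicit. Unset Printing Implicit Defensive.

(* Let K be the kernel of the restriction G(d) -> G(d-1): an element of K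
   just chooses, for each vertex v of level d-1, whether to swap the two
   children of v, so K is elementary abelian.  As P(d-1) = G(d-1), G(d) = P K,
   hence [G(d) : P] = [K : N] for N = K :&: P, and N is normalised by P K.
   For k in K and a word y, let the parity of k at y count mod 2 the vertices
   of level d-1 below y where k swaps.  The parities at the two letters give a
   homomorphism from K onto F_2^2 whose kernel Keven has index 4.
   Descending level by level, an element of N odd at one letter yields, by
   conjugation, elements of N whose parities on level j+1 are the indicator of
   the children of any vertex of level j, and these produce every element of K
   with even parities on level j; hence either N <= Keven or Keven < N.  The
   commutator [a_1, a_(d-1)] lies in Keven and already has indicator parities on
   level 2, so it forces Keven <= N, whereas [a_0, a_(d-1)] is odd at both letters
   and lies in N exactly when Keven < N.  So both sides of the equivalence
   say N = Keven. *)

Local Open Scope group_scope.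

Section Words.

Variable d : nat.
Implicit Types w : word d.

Lemma size_wval w : size (wval w) <= d.
Proof. by rewrite -mem_words; exact: ssvalP. Qed.

Lemma wval_mkw s : size s <= d -> wval (mkw d s) = s.
Proof. by move=> le_s_d; rewrite /wval /mkw insubdK // mem_words. Qed.

Lemma wvalK : cancel (@wval d) (mkw d).
Proof. by move=> w; apply: val_inj; rewrite /= -/(wval _) wval_mkw // size_wval. Qed.

Lemma wval_inj : injective (@wval d).
Proof. exact: val_inj. Qed.

Lemma mkw_inj s1 s2 :
  size s1 <= d -> size s2 <= d -> mkw d s1 = mkw d s2 -> s1 = s2.
Proof. by move=> le_s1 le_s2 eq_w; rewrite -(wval_mkw le_s1) -(wval_mkw le_s2) eq_w. Qed.

Lemma wval_parent w : wval (wparent w) = take (size (wval w)).-1 (wval w).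
Proof. by rewrite wval_mkw // size_take_min (leq_trans (geq_minr _ _)) ?size_wval. Qed.

Lemma size_parent w : size (wval (wparent w)) = (size (wval w)).-1.
Proof. by rewrite wval_parent size_take_min; apply/minn_idPl/leq_pred. Qed.

Lemma parent_fixed w : wparent w = w -> wval w = [::].
Proof.
move=> /(congr1 (fun x => size (wval x))); rewrite size_parent.
by case: (wval w) => //= b s /eqP; rewrite eqn_leq ltnn andbF.
Qed.

End Words.

Lemma inGP d (g : {perm word d}) :
  reflect (forall w, g (wparent w) = wparent (g w)) (g \in G d).
Proof. by rewrite inE; apply: (iffP forallP) => Gg w; exact/eqP/Gg. Qed.

Lemma group_set_G d : group_set (G d).
Proof.
apply/group_setP; split; first by apply/inGP => w; rewrite !perm1.
by move=> x y /inGP Gx /inGP Gy; apply/inGP => w; rewrite !permM Gx Gy.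
Qed.

Canonical G_group d := Group (group_set_G d).

Lemma G_fixes_root d (g : {perm word d}) : g \in G d -> g (wroot d) = wroot d.
Proof.
move=> /inGP Gg; apply: wval_inj; rewrite [wval (wroot d)]/=; apply: parent_fixed.
have root_fixed : wparent (wroot d) = wroot d by apply: wval_inj; rewrite wval_parent.
by rewrite -Gg root_fixed.
Qed.

Lemma size_wval_G d (g : {perm word d}) w :
  g \in G d -> size (wval (g w)) = size (wval w).
Proof.
move=> Gg; have root_eq (u : word d) : size (wval u) = 0 -> u = wroot d.
  by move=> /size0nil u0; apply: wval_inj.
move size_w : (size (wval w)) => m; elim: m w size_w => [|m IHm] w size_w.
  by rewrite (root_eq w size_w) G_fixes_root.
have := IHm (wparent w); rewrite size_parent size_w => /(_ erefl).
move/inGP: (Gg) => ->; rewrite size_parent.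
case size_gw: (size (wval (g w))) => [|k] /= -> //.
have gw_root : g w = g (wroot d) by rewrite G_fixes_root //; exact: root_eq.
by move: size_w; rewrite (perm_inj gw_root).
Qed.

Lemma prefix_rcons_eq (z y : seq bool) b :
  size z = size y -> prefix z (rcons y b) = (y == z).
Proof. by move=> eq_size; rewrite prefixE -cats1 take_size_cat. Qed.

Lemma prefix_rcons (y s : seq bool) b : size y < size s ->
  prefix (rcons y b) s = prefix y s && (nth false s (size y) == b).
Proof. by move=> lt_ys; rewrite !prefixE size_rcons (take_nth false lt_ys) eqseq_rcons. Qed.

(* [twist phi] is the tree automorphism with portrait [phi]: the letter
   following a prefix [u] is flipped iff [phi u]. *)
Fixpoint twist (phi : seq bool -> bool) (s : seq bool) : seq bool :=
  if s is b :: s' then (b (+) phi [::]) :: twist (fun u => phi (b :: u)) s'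
  else [::].

Definition twist_invariant (phi : seq bool -> bool) :=
  forall u, phi (twist phi u) = phi u.

Section Twist.

Implicit Types (phi chi : seq bool -> bool) (s t u y z : seq bool).

Lemma size_twist phi s : size (twist phi s) = size s.
Proof. by elim: s phi => //= b s IHs phi; rewrite IHs. Qed.

Lemma take_twist phi k s : take k (twist phi s) = twist phi (take k s).
Proof. by elim: s phi k => //= b s IHs phi [|k] //=; rewrite IHs. Qed.

Lemma nth_twist phi s i : i < size s ->
  nth false (twist phi s) i = nth false s i (+) phi (take i s).
Proof. by elim: s phi i => //= b s IHs phi [|i] //= lt_i; rewrite IHs. Qed.

Lemma twist_from_nth phi s t : size t = size s ->
  (forall i, i < size s -> nth false t i = nth false s i (+) phi (take i s)) ->
  twist phi s = t.
Proof.
move=> size_t nth_t; apply: (eq_from_nth (x0 := false)); first by rewrite size_twist.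
by move=> i; rewrite size_twist => lt_i; rewrite nth_twist // nth_t.
Qed.

Lemma twist_cancel phi chi :
  (forall u, phi (twist chi u) = chi u) -> cancel (twist chi) (twist phi).
Proof.
move=> phi_chi s; elim: s phi chi phi_chi => //= b s IHs phi chi phi_chi.
rewrite [phi [::]](phi_chi [::]) -addbA addbb addbF; congr (_ :: _).
by apply: IHs => u; rewrite -(phi_chi (b :: u)).
Qed.

Lemma twistK phi : twist_invariant phi -> involutive (twist phi).
Proof. exact: twist_cancel. Qed.

Lemma twist_inj phi : injective (twist phi).
Proof.
move=> s1 s2; elim: s1 s2 phi => [|b1 s1 IHs] [|b2 s2] phi //= [eq_b eq_s].
by move: eq_s; rewrite (addIb eq_b) => /IHs ->.
Qed.

Lemma prefix_twist phi y u :
  twist_invariant phi -> prefix y (twist phi u) = prefix (twist phi y) u.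
Proof.
move=> phiK; rewrite !prefixE size_twist take_twist.
by rewrite (can2_eq (twistK phiK) (twistK phiK)).
Qed.

Lemma twist_id phi s :
  (forall i, i < size s -> phi (take i s) = false) -> twist phi s = s.
Proof. by move=> phi0; apply: twist_from_nth => // i lt_i; rewrite phi0 ?addbF. Qed.

Definition swap_at z u := u == z.

Lemma twist_swap_at_short z u : size u <= size z -> twist (swap_at z) u = u.
Proof.
move=> le_uz; apply: twist_id => i lt_i; apply: contraTF isT => /eqP take_z.
by move: lt_i le_uz; rewrite -take_z size_take_min; lia.
Qed.

Lemma twist_swap_at_nprefix z u : ~~ prefix z u -> twist (swap_at z) u = u.
Proof.
move=> nzu; apply: twist_id => i lt_i; apply: contraNF nzu => /eqP take_z.
by rewrite prefixE -take_z size_takel ?(ltnW lt_i) // take_z.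
Qed.

Lemma twist_swap_at_rcons z b : twist (swap_at z) (rcons z b) = rcons z (~~ b).
Proof.
apply: twist_from_nth; first by rewrite !size_rcons.
move=> i; rewrite size_rcons ltnS leq_eqVlt => /orP [/eqP ->|lt_iz].
  by rewrite !nth_rcons ltnn eqxx -cats1 take_size_cat // /swap_at eqxx addbT.
rewrite !nth_rcons lt_iz /swap_at; suff -> : (take i (rcons z b) == z) = false.
  by rewrite addbF.
apply: contraTF isT => /eqP take_z; move: lt_iz; rewrite -take_z size_take_min size_rcons; lia.
Qed.

Lemma swap_at_invariant z : twist_invariant (swap_at z).
Proof.
move=> u; have [le_uz|lt_zu] := leqP (size u) (size z).
  by rewrite twist_swap_at_short.
have neq_z s : size s != size z -> swap_at z s = false.
  by move=> ns; apply: contraNF ns => /eqP ->.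
by rewrite !neq_z ?size_twist // gtn_eqF.
Qed.

Definition level_flip z z' u := nth false z (size u) (+) nth false z' (size u).

Lemma level_flip_invariant z z' : twist_invariant (level_flip z z').
Proof. by move=> u; rewrite /level_flip size_twist. Qed.

Lemma twist_level_flip z z' : size z = size z' -> twist (level_flip z z') z = z'.
Proof.
move=> eq_size; apply: twist_from_nth => // i lt_i.
by rewrite /level_flip size_takel ?(ltnW lt_i) // addKb.
Qed.

Lemma aseq_twist i : aseq i =1 twist (swap_at (nseq i false)).
Proof.
move=> s; rewrite /aseq; case: ifP => [/andP [lt_i /eqP take_i]|not_ai]; last first.
  apply/esym/twist_id => k lt_k; apply: contraFF not_ai => /eqP take_k.
  have eq_ki : k = i by rewrite -(size_nseq i false) -take_k size_takel ?(ltnW lt_k).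
  by subst k; rewrite lt_k take_k eqxx.
have -> : take i s ++ ~~ nth false s i :: drop i.+1 s
          = set_nth false s i (~~ nth false s i) by rewrite set_nthE lt_i.
apply/esym/twist_from_nth.
  by rewrite size_set_nth; apply/maxn_idPr.
move=> k lt_k; rewrite nth_set_nth /= /swap_at.
have [->|neq_ki] := eqVneq k i; first by rewrite take_i eqxx addbT.
suff -> : (take k s == nseq i false) = false by rewrite addbF.
apply: contraNF neq_ki => /eqP/(congr1 size).
by rewrite size_nseq size_takel ?(ltnW lt_k) // => ->.
Qed.

End Twist.

Lemma twist_word_inj d phi : injective (fun w : word d => mkw d (twist phi (wval w))).
Proof.
move=> x y /mkw_inj; rewrite !size_twist !size_wval => /(_ isT isT) /twist_inj.
exact: wval_inj.
Qed.

Definition twist_perm d phi : {perm word d} := perm (@twist_word_inj d phi).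

Lemma wval_twist_perm d phi w : wval (twist_perm d phi w) = twist phi (wval w).
Proof. by rewrite permE wval_mkw // size_twist size_wval. Qed.

Lemma twist_perm_G d phi : twist_perm d phi \in G d.
Proof.
apply/inGP => w; apply: wval_inj.
by rewrite wval_twist_perm !wval_parent wval_twist_perm size_twist take_twist.
Qed.

Lemma a_twist d i : a d i = twist_perm d (swap_at (nseq i false)).
Proof.
apply/permP => w; apply: wval_inj; rewrite wval_twist_perm permE wval_mkw.
  exact: aseq_twist.
by rewrite size_aseq size_wval.
Qed.

Lemma a_G d i : a d i \in G d.
Proof. by rewrite a_twist twist_perm_G. Qed.

Section Children.

Variable d : nat.
Implicit Types v w : word d.

Definition child (b : bool) v : word d := mkw d (rcons (wval v) b).

Lemma wval_child b v : size (wval v) < d -> wval (child b v) = rcons (wval v) b.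
Proof. by move=> lt_vd; rewrite wval_mkw // size_rcons. Qed.

Lemma child_eq b c v : size (wval v) < d -> (child b v == child c v) = (b == c).
Proof.
move=> lt_vd; rewrite -(inj_eq (@wval_inj d)) !wval_child //.
by rewrite eqseq_rcons eqxx.
Qed.

Lemma parent_child b v : size (wval v) < d -> wparent (child b v) = v.
Proof.
move=> lt_vd; apply: wval_inj.
by rewrite wval_parent wval_child // size_rcons -cats1 take_size_cat.
Qed.

Lemma child_last_parent w : 0 < size (wval w) ->
  w = child (last false (wval w)) (wparent w).
Proof.
move=> nonroot; apply: wval_inj; rewrite wval_child; last first.
  by rewrite size_parent prednK // size_wval.
rewrite wval_parent; case/lastP: (wval w) nonroot => //= t z _.
by rewrite size_rcons /= last_rcons -cats1 take_size_cat // cats1.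
Qed.

Lemma G_child (g : {perm word d}) b v : g \in G d -> size (wval v) < d ->
  g (child b v) = child (last false (wval (g (child b v)))) (g v).
Proof.
move=> Gg lt_vd; rewrite {1}(child_last_parent (w := g (child b v))).
  by move/inGP: Gg => <-; rewrite parent_child.
by rewrite size_wval_G // wval_child // size_rcons.
Qed.

End Children.

Definition K d : {set {perm word d}} :=
  [set k in G d | [forall w : word d, (size (wval w) < d) ==> (k w == w)]].

Definition flip d (k : {perm word d}) (v : word d) : bool :=
  k (child false v) != child false v.

Section LastLevelKernel.

Variable d : nat.
Implicit Types (k g h : {perm word d}) (v w : word d).

Lemma inKP k : reflect (k \in G d /\ forall w, size (wval w) < d -> k w = w) (k \in K d).
Proof.
rewrite [k \in K d]inE; apply: (iffP andP) => [[Gk /forallP fixk]|[Gk fixk]]; split => //.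
  by move=> w lt_wd; apply/eqP; move/implyP: (fixk w); apply.
by apply/forallP => w; apply/implyP => /fixk ->.
Qed.

Lemma group_set_K : group_set (K d).
Proof.
apply/group_setP; split; first by apply/inKP; split=> [|w _]; rewrite ?group1 ?perm1.
move=> x y /inKP [Gx fixx] /inKP [Gy fixy]; apply/inKP; split; first exact: groupM.
by move=> w lt_wd; rewrite permM fixx // fixy.
Qed.

Canonical K_group := Group group_set_K.

Lemma K_sub : K d \subset G d.
Proof. by apply/subsetP => k /inKP []. Qed.

Lemma K_conj k h : k \in K d -> h \in G d -> k ^ h \in K d.
Proof.
move=> /inKP [Gk fixk] Gh; apply/inKP; split; first by rewrite groupJ.
move=> w lt_wd; rewrite conjgE !permM fixk ?size_wval_G ?groupV //.
by rewrite -permM mulVg perm1.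
Qed.

Lemma K_normal : K d <| G d.
Proof.
rewrite /normal K_sub; apply/subsetP => h Gh; rewrite inE.
by apply/subsetP => k; rewrite mem_conjg => /K_conj/(_ Gh); rewrite conjgKV.
Qed.

Lemma K_child k b v : k \in K d -> size (wval v) < d ->
  k (child b v) = child (b (+) flip k v) v.
Proof.
move=> /inKP [Gk fixk] lt_vd.
have kchild c : exists c', k (child c v) = child c' v.
  by eexists; rewrite (G_child c Gk lt_vd) (fixk v lt_vd).
have [c0 kc0] := kchild false; rewrite /flip kc0 child_eq //.
case: b => /=; last by case: c0 kc0.
have [c1 kc1] := kchild true.
have : k (child true v) != k (child false v) by rewrite (inj_eq perm_inj) child_eq.
by rewrite kc1 kc0 child_eq //; case: c1 c0 {kc1 kc0} => [] [].
Qed.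

Lemma flip1 v : flip 1 v = false.
Proof. by rewrite /flip perm1 eqxx. Qed.

Lemma flipM k1 k2 v : k1 \in K d -> k2 \in K d -> size (wval v) < d ->
  flip (k1 * k2) v = flip k1 v (+) flip k2 v.
Proof.
move=> Kk1 Kk2 lt_vd; rewrite {1}/flip permM !K_child // child_eq //.
by case: (flip k1 v) (flip k2 v) => [] [].
Qed.

Lemma flipV k v : k \in K d -> size (wval v) < d -> flip k^-1 v = flip k v.
Proof.
move=> Kk lt_vd; have := flipM Kk (groupVr Kk) lt_vd.
by rewrite mulgV flip1; case: (flip k v) (flip k^-1 v) => [] [].
Qed.

Lemma flip_below k v : k \in K d -> size (wval v) < d.-1 -> flip k v = false.
Proof.
move=> /inKP [_ fixk] lt_v; rewrite /flip fixk ?eqxx // wval_child ?size_rcons; lia.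
Qed.

Lemma eq_K_flip k1 k2 : 0 < d -> k1 \in K d -> k2 \in K d ->
  (forall v, size (wval v) < d -> flip k1 v = flip k2 v) -> k1 = k2.
Proof.
move=> d_gt0 Kk1 Kk2 eq_flip; apply/permP => w.
have [lt_wd|le_dw] := ltnP (size (wval w)) d.
  by move/inKP: Kk1 => [_ ->] //; move/inKP: Kk2 => [_ ->].
have nonroot : 0 < size (wval w) := leq_trans d_gt0 le_dw.
have lt_parent : size (wval (wparent w)) < d.
  by rewrite size_parent; have := size_wval w; lia.
by rewrite (child_last_parent nonroot) !K_child // eq_flip.
Qed.

Lemma K_abelian : 0 < d -> abelian (K d).
Proof.
move=> d_gt0; apply/centsP => k1 Kk1 k2 Kk2.
apply: eq_K_flip; rewrite ?groupM // => v lt_vd.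
by rewrite !flipM // addbC.
Qed.

Lemma flipJ k h v : k \in K d -> h \in G d -> size (wval v) < d ->
  flip (k ^ h) v = flip k (h^-1 v).
Proof.
move=> Kk Gh lt_vd; have Gh' : h^-1 \in G d by rewrite groupV.
have lt_u : size (wval (h^-1 v)) < d by rewrite size_wval_G.
rewrite {1}/flip conjgE !permM (G_child false Gh' lt_vd); set c := last false _.
have h_child : h (child c (h^-1 v)) = child false v.
  by rewrite -(G_child false Gh' lt_vd) -permM mulVg perm1.
rewrite K_child //; case: (flip k (h^-1 v)); rewrite ?addbF ?h_child ?eqxx //.
apply/negP => /eqP; rewrite -[X in _ = X]h_child => /perm_inj /eqP.
by rewrite child_eq // addbT; case: (c).
Qed.

End LastLevelKernel.

Definition parity d (k : {perm word d}) (y : seq bool) : bool :=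
  \big[addb/false]_(v : word d | (size (wval v) == d.-1) && prefix y (wval v))
    flip k v.

Section Parity.

Variable d : nat.
Hypothesis d_gt0 : 0 < d.
Implicit Types (k : {perm word d}) (v : word d) (y : seq bool).

Let lt_top v : size (wval v) = d.-1 -> size (wval v) < d.
Proof. by move=> ->; rewrite prednK. Qed.

Lemma parity1 y : parity (1 : {perm word d}) y = false.
Proof. by rewrite /parity big1 // => v _; rewrite flip1. Qed.

Lemma parityM k1 k2 y : k1 \in K d -> k2 \in K d ->
  parity (k1 * k2) y = parity k1 y (+) parity k2 y.
Proof.
move=> Kk1 Kk2; rewrite /parity -big_split /=.
by apply: eq_bigr => v /andP [/eqP /lt_top lt_vd _]; rewrite flipM.
Qed.

Lemma parityV k y : k \in K d -> parity k^-1 y = parity k y.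
Proof.
by move=> Kk; apply: eq_bigr => v /andP [/eqP /lt_top lt_vd _]; rewrite flipV.
Qed.

Lemma parityJ_twist k phi y : k \in K d -> twist_invariant phi -> size y <= d.-1 ->
  parity (k ^ twist_perm d phi) y = parity k (twist phi y).
Proof.
move=> Kk phiK le_y; rewrite /parity (reindex_inj (h := twist_perm d phi) perm_inj).
apply: eq_big => [v|v /andP [/eqP size_v _]].
  by rewrite wval_twist_perm size_twist prefix_twist.
by rewrite flipJ ?permK ?twist_perm_G ?lt_top.
Qed.

Lemma parity_children k y : size y < d.-1 ->
  parity k y = parity k (rcons y false) (+) parity k (rcons y true).
Proof.
move=> lt_y; rewrite /parity (bigID (fun v : word d => nth false (wval v) (size y))).
rewrite addbC; congr (_ (+) _); apply: eq_bigl => v.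
all: case: eqP => //= size_v; rewrite prefix_rcons ?size_v //.
all: by case: (nth false _ _); rewrite ?andbT ?andbF.
Qed.

Lemma parity_top k y : size y = d.-1 -> parity k y = flip k (mkw d y).
Proof.
move=> size_y; rewrite /parity (big_pred1 (mkw d y)) // => v /=.
have le_y : size y <= d by rewrite size_y leq_pred.
apply/andP/eqP => [[/eqP size_v prefix_y]|->]; last first.
  by rewrite wval_mkw // size_y eqxx prefix_refl.
by apply: wval_inj; move: prefix_y; rewrite wval_mkw // prefixE size_y -size_v take_size => /eqP.
Qed.

Lemma parity_single_flip k u y : size u = d.-1 ->
  (forall v, size (wval v) = d.-1 -> flip k v = (wval v == u)) -> size y <= d.-1 ->
  parity k y = prefix y u.
Proof.
move=> size_u flip_u le_y; have le_u : size u <= d by rewrite size_u leq_pred.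
rewrite /parity (eq_bigr (fun v => wval v == u)); last by move=> v /andP [/eqP /flip_u].
have [prefix_yu|not_yu] := boolP (prefix y u); last first.
  by rewrite big1 // => v /andP [_ yv]; apply: contraNF not_yu => /eqP <-.
rewrite (bigD1 (mkw d u)) /= ?wval_mkw // ?size_u ?eqxx //.
rewrite big1 // => v /andP [_ ne_v]; apply: contraNF ne_v => /eqP <-.
by rewrite wvalK.
Qed.

Lemma even_level_succ k j : j < d.-1 ->
  (forall y, size y = j -> parity k y = false) ->
  (forall y, size y = j -> parity k (rcons y false) = false) ->
  forall y, size y = j.+1 -> parity k y = false.
Proof.
move=> lt_j even_j even_j0 y; case/lastP: y => // y [] /=; rewrite size_rcons => -[size_y].
  by have := parity_children k (y := y); rewrite size_y even_j // even_j0 // => ->.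
exact: even_j0.
Qed.

End Parity.

Section Descent.

Variables (d : nat) (N : {group {perm word d}}).
Hypotheses (d_gt1 : 1 < d) (sNK : N \subset K d) (nNG : G d \subset 'N(N)).

Let d_gt0 : 0 < d. Proof. exact: ltnW. Qed.
Let NK k : k \in N -> k \in K d. Proof. exact: subsetP. Qed.
Let NJ k h : k \in N -> h \in G d -> k ^ h \in N.
Proof. by move=> Nk Gh; rewrite memJ_norm // (subsetP nNG). Qed.

Definition level_even_sub j := forall k, k \in K d ->
  (forall y, size y = j -> parity k y = false) -> k \in N.

Definition indicator_at j := exists2 f, f \in N &
  exists2 z, size z = j & forall y, size y = j.+1 -> parity f y = prefix z y.

Lemma level_even_sub_top : level_even_sub d.-1.
Proof.
move=> k Kk even_k; suff -> : k = 1 by exact: group1.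
apply: (eq_K_flip d_gt0 Kk (group1 (K_group d))) => v lt_vd; rewrite flip1.
have [lt_v|ge_v] := ltnP (size (wval v)) d.-1; first exact: flip_below.
have size_v : size (wval v) = d.-1 by lia.
by rewrite -(even_k _ size_v) parity_top // wvalK.
Qed.

(* On level |z|+1, [f^-1 * f^(swap_at z)] has the parity of [f] at [z] at both
   children of [z], and is even elsewhere. *)
Lemma indicator_of_odd f z : f \in N -> size z < d.-1 -> parity f z ->
  indicator_at (size z).
Proof.
move=> Nf lt_z odd_f; have Kf := NK Nf.
exists (f^-1 * f ^ twist_perm d (swap_at z)).
  by rewrite groupM ?groupV ?NJ ?twist_perm_G.
exists z => // y; case/lastP: y => // y c; rewrite size_rcons => -[size_y].
have pre b : prefix z (rcons y b) = (y == z) := prefix_rcons_eq b (esym size_y).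
rewrite parityM ?groupV ?K_conj ?twist_perm_G // parityV //.
rewrite (parityJ_twist d_gt0 Kf (swap_at_invariant z)) ?size_rcons ?size_y // pre.
have [eq_y|ne_y] := eqVneq y z; last by rewrite twist_swap_at_nprefix ?pre ?ne_y ?addbb.
subst y; rewrite twist_swap_at_rcons; move: odd_f; rewrite (parity_children f lt_z).
by case: c; case: (parity f (rcons z false)); case: (parity f (rcons z true)).
Qed.

Lemma indicator_succ j : indicator_at j -> j.+1 < d.-1 -> indicator_at j.+1.
Proof.
move=> [f Nf [z size_z par_f]] lt_j1.
have odd_f : parity f (rcons z false).
  by rewrite par_f ?size_rcons ?size_z // prefix_rcons_eq ?eqxx.
have lt_z : size (rcons z false) < d.-1 by rewrite size_rcons size_z.
by have := indicator_of_odd Nf lt_z odd_f; rewrite size_rcons size_z.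
Qed.

(* Conjugating by a level-wise flip moves the indicator to any vertex of level j. *)
Lemma indicator_transport j z : j < d.-1 -> indicator_at j -> size z = j ->
  exists2 g, g \in N & forall y, size y = j.+1 -> parity g y = prefix z y.
Proof.
move=> lt_j [f Nf [z0 size_z0 par_f]] size_z.
exists (f ^ twist_perm d (level_flip z0 z)); first by rewrite NJ ?twist_perm_G.
have flipK := level_flip_invariant z0 z.
move=> y size_y; rewrite (parityJ_twist d_gt0 (NK Nf) flipK) ?size_y //.
rewrite par_f ?size_twist // prefix_twist //.
by rewrite twist_level_flip // size_z.
Qed.

Lemma level_even_sub_pred j : j < d.-1 ->
  indicator_at j -> level_even_sub j.+1 -> level_even_sub j.
Proof.
move=> lt_j ind_j even_sub_j1.
pose odd_left (k : {perm word d}) :=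
  [set w : word d | (size (wval w) == j) && parity k (rcons (wval w) false)].
have no_odd_left k : k \in K d -> (forall y, size y = j -> parity k y = false) ->
    odd_left k = set0 -> k \in N.
  move=> Kk even_k odd_left_k; apply: even_sub_j1 => //.
  apply: even_level_succ => // y size_y; apply: contraTF isT => odd_y.
  have : mkw d y \in odd_left k by rewrite inE wval_mkw ?size_y ?eqxx //; lia.
  by rewrite odd_left_k inE.
(* Induction on the number of vertices of level j with an odd left child;
   multiplying by the indicator at such a vertex removes it. *)
suff card_odd_left n k : #|odd_left k| <= n -> k \in K d ->
    (forall y, size y = j -> parity k y = false) -> k \in N.
  by move=> k; apply: (card_odd_left #|odd_left k|).
elim: n k => [|n IHn] k card_k Kk even_k.
all: have [odd_left_k|[w w_odd]] := set_0Vmem (odd_left k); first exact: no_odd_left.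
  by move: card_k; rewrite (cardsD1 w) w_odd.
move: (w_odd); rewrite inE => /andP [/eqP size_w odd_w].
have [g Ng par_g] := indicator_transport lt_j ind_j size_w.
have Kg := NK Ng.
have g_even y : size y = j -> parity g y = false.
  move=> size_y; rewrite (parity_children g) ?size_y // !par_g ?size_rcons ?size_y //.
  by rewrite !prefix_rcons_eq ?size_y // addbb.
have odd_left_kg : odd_left (k * g) \proper odd_left k.
  apply/properP; split; last first.
    exists w => //; rewrite inE size_w eqxx parityM // par_g ?size_rcons ?size_w //.
    by rewrite prefix_rcons_eq // eqxx odd_w.
  apply/subsetP => v; rewrite !inE => /andP [/eqP size_v]; rewrite size_v eqxx /=.
  rewrite parityM // par_g ?size_rcons ?size_v // prefix_rcons_eq ?size_v //.
  by case: eqP => [->|_]; rewrite ?odd_w ?addbF.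
have Nkg : k * g \in N.
  apply: IHn; rewrite ?groupM //; last by move=> y size_y; rewrite parityM // even_k // g_even.
  by rewrite -ltnS (leq_trans (proper_card odd_left_kg)).
by rewrite -(mulgK g k) groupM ?groupV.
Qed.

Lemma level_even_sub_1 : (1 < d.-1 -> indicator_at 1) -> level_even_sub 1.
Proof.
move=> ind1; have [eq_d|lt_d] := eqVneq d.-1 1%N.
  by rewrite -eq_d; exact: level_even_sub_top.
have ind j : 0 < j < d.-1 -> indicator_at j.
  elim: j => [//|[|j] IHj /andP [_ lt_j]]; first by apply: ind1; lia.
  by apply: indicator_succ => //; apply: IHj; lia.
have even_sub n : n < d.-1 -> level_even_sub (d.-1 - n).
  elim: n => [_|n IHn lt_n]; first by rewrite subn0; exact: level_even_sub_top.
  have eq_j : (d.-1 - n.+1).+1 = d.-1 - n by lia.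
  apply: level_even_sub_pred; [lia | apply: ind; lia | rewrite eq_j; apply: IHn; lia].
suff: level_even_sub (d.-1 - (d.-1).-1) by have -> : d.-1 - (d.-1).-1 = 1%N by lia.
apply: even_sub; lia.
Qed.

End Descent.

Lemma a_last_K d : a d d.-1 \in K d.
Proof.
apply/inKP; split=> [|w lt_wd]; first exact: a_G.
apply: wval_inj; rewrite a_twist wval_twist_perm twist_swap_at_short // size_nseq; lia.
Qed.

Lemma comm_a_K d i : [~ a d i, a d d.-1] \in K d.
Proof. by rewrite commgEr groupM ?K_conj ?groupV ?a_last_K ?a_G. Qed.

Section LevelOneParities.

Variable d : nat.
Hypothesis d_gt1 : 1 < d.

Let d_gt0 : 0 < d. Proof. exact: ltnW. Qed.

Lemma flip_a_last v : size (wval v) = d.-1 ->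
  flip (a d d.-1) v = (wval v == nseq d.-1 false).
Proof.
move=> size_v; have lt_vd : size (wval v) < d by lia.
rewrite /flip -(inj_eq (@wval_inj d)) a_twist wval_twist_perm wval_child //.
case: (wval v =P nseq d.-1 false) => [->|ne_v].
  by rewrite twist_swap_at_rcons eqseq_rcons eqxx.
by rewrite twist_swap_at_nprefix ?eqxx // prefix_rcons_eq ?size_nseq //; apply/eqP.
Qed.

Lemma parity_a_last y : size y <= d.-1 -> parity (a d d.-1) y = prefix y (nseq d.-1 false).
Proof. by apply: parity_single_flip; [rewrite size_nseq | exact: flip_a_last]. Qed.

Lemma parity_comm_a i y : size y <= d.-1 ->
  parity [~ a d i, a d d.-1] y =
  prefix (twist (swap_at (nseq i false)) y) (nseq d.-1 false) (+) prefix y (nseq d.-1 false).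
Proof.
move=> le_y; have Ka := a_last_K d.
rewrite commgEr parityM ?K_conj ?groupV ?a_G // [a d i]a_twist.
rewrite (parityJ_twist d_gt0 (groupVr Ka) (swap_at_invariant _)) //.
by rewrite parityV // !parity_a_last ?size_twist.
Qed.

Lemma parity_comm_a0 b : parity [~ a d 0, a d d.-1] [:: b] = true.
Proof.
rewrite parity_comm_a /=; last lia.
have -> : d.-1 = d.-2.+1 by lia.
by rewrite !prefix_cons !prefix0s /swap_at eqxx; case: b.
Qed.

Lemma parity_comm_a1 b : parity [~ a d 1, a d d.-1] [:: b] = false.
Proof. by rewrite parity_comm_a ?twist_swap_at_short ?addbb ?size_nseq //=; lia. Qed.

Lemma parity_comm_a1_level2 y : 2 < d -> size y = 2 ->
  parity [~ a d 1, a d d.-1] y = prefix [:: false] y.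
Proof.
move=> d_gt2 size_y; rewrite parity_comm_a ?size_y; last lia.
have -> : d.-1 = (d - 3).+2 by lia.
case: y size_y => [|b1 [|b2 []]] //= _.
by rewrite !prefix0s /swap_at; case: b1; case: b2.
Qed.

Definition level1_rep (b0 b1 : bool) : {perm word d} :=
  a d d.-1 ^+ b0 * (a d d.-1 ^ a d 0) ^+ b1.

Lemma level1_rep_K b0 b1 : level1_rep b0 b1 \in K d.
Proof. by rewrite groupM ?groupX ?K_conj ?a_last_K ?a_G. Qed.

Lemma parity_level1_rep b0 b1 b :
  parity (level1_rep b0 b1) [:: b] = if b then b1 else b0.
Proof.
have Ka := a_last_K d; have Ka' : a d d.-1 ^ a d 0 \in K d by rewrite K_conj ?a_G.
have parity_a c : parity (a d d.-1) [:: c] = ~~ c.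
  rewrite parity_a_last /=; last lia.
  have -> : d.-1 = d.-2.+1 by lia.
  by rewrite /= prefix0s andbT; case: c.
have parity_a' c : parity (a d d.-1 ^ a d 0) [:: c] = c.
  rewrite [a d 0]a_twist (parityJ_twist d_gt0 Ka (swap_at_invariant _)) /=; last lia.
  by rewrite /swap_at /= addbT parity_a negbK.
rewrite parityM ?groupX //.
by case: b0; case: b1; case: b; rewrite ?expg0 ?expg1 ?parity1 ?parity_a ?parity_a'.
Qed.

Lemma level1_repM b0 b1 c0 c1 :
  level1_rep (b0 (+) c0) (b1 (+) c1) = level1_rep b0 b1 * level1_rep c0 c1.
Proof.
have Ka := a_last_K d; have Ka' : a d d.-1 ^ a d 0 \in K d by rewrite K_conj ?a_G.
have flipX k (b : bool) v : flip (k ^+ b) v = b && flip k v.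
  by case: b; rewrite ?expg0 ?expg1 ?flip1.
apply: eq_K_flip; rewrite ?groupM ?groupX ?level1_rep_K // => v lt_vd.
rewrite /level1_rep !flipM ?groupM ?groupX // !flipX.
by case: b0 b1 c0 c1 (flip (a d d.-1) v) (flip (a d d.-1 ^ a d 0) v) => [] [] [] [] [] [].
Qed.

Definition parity1_map (k : {perm word d}) :=
  level1_rep (parity k [:: false]) (parity k [:: true]).

Lemma parity1_mapM : {in K d &, {morph parity1_map : x y / x * y}}.
Proof. by move=> x y Kx Ky; rewrite /parity1_map !parityM // level1_repM. Qed.

Canonical parity1_morphism := Morphism parity1_mapM.

Local Notation Keven := ('ker parity1_morphism).

Lemma level1_rep_inj b0 b1 c0 c1 :
  level1_rep b0 b1 = level1_rep c0 c1 -> b0 = c0 /\ b1 = c1.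
Proof.
move=> eq_rep; split.
  by have := congr1 (fun k => parity k [:: false]) eq_rep; rewrite !parity_level1_rep.
by have := congr1 (fun k => parity k [:: true]) eq_rep; rewrite !parity_level1_rep.
Qed.

Lemma mem_Keven k :
  (k \in Keven) = [&& k \in K d, ~~ parity k [:: false] & ~~ parity k [:: true]].
Proof.
have rep1 : level1_rep false false = 1 by rewrite /level1_rep !expg0 mulg1.
apply/idP/and3P => [ker_k|[Kk even0 even1]]; last first.
  by apply/kerP => //=; rewrite /parity1_map (negbTE even0) (negbTE even1).
have Kk := dom_ker ker_k; move/kerP: ker_k => /(_ Kk) /=.
by rewrite /parity1_map -rep1 => /level1_rep_inj [-> ->].
Qed.

Lemma index_Keven : #|K d : Keven| = 4.
Proof.
have := card_morphim parity1_morphism (K_group d); rewrite setIid => <-.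
rewrite morphimEdom.
have -> : parity1_morphism @: K d = [set level1_rep b.1 b.2 | b : bool * bool].
  apply/setP => x; apply/imsetP/imsetP => [[k _ ->]|[b _ ->]].
    by exists (parity k [:: false], parity k [:: true]).
  by exists (level1_rep b.1 b.2); rewrite ?level1_rep_K //= /parity1_map !parity_level1_rep.
rewrite card_imset; first by rewrite card_prod card_bool.
by move=> [b0 b1] [c0 c1] /= /level1_rep_inj [-> ->].
Qed.

Lemma odd_of_notin_Keven k : k \in K d -> k \notin Keven -> exists b, parity k [:: b].
Proof.
rewrite mem_Keven => -> /=; rewrite -negb_or negbK.
by case/orP; [exists false | exists true].
Qed.

Section InvariantSubgroup.

Variable N : {group {perm word d}}.
Hypotheses (sNK : N \subset K d) (nNG : G d \subset 'N(N)).

Lemma Keven_sub_of_level1 : (1 < d.-1 -> indicator_at N 1) -> Keven \subset N.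
Proof.
move=> ind1; apply/subsetP => k; rewrite mem_Keven => /and3P [Kk even0 even1].
apply: (level_even_sub_1 d_gt1 sNK nNG ind1) => // y.
by case: y => [|[] []] //= _; apply/negbTE.
Qed.

Lemma Keven_sub_of_odd k b : k \in N -> parity k [:: b] -> Keven \subset N.
Proof.
move=> Nk odd_k; apply: Keven_sub_of_level1 => lt_d.
exact: (@indicator_of_odd _ _ d_gt1 sNK nNG k [:: b] Nk lt_d odd_k).
Qed.

Lemma Keven_sub_of_comm_a1 : [~ a d 1, a d d.-1] \in N -> Keven \subset N.
Proof.
move=> Nc1; apply: Keven_sub_of_level1 => lt_d; exists [~ a d 1, a d d.-1] => //.
by exists [:: false] => // y size_y; apply: parity_comm_a1_level2 => //; lia.
Qed.

Lemma sub_Keven_or_proper : N \subset Keven \/ Keven \proper N.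
Proof.
have [|/subsetPn [k Nk notin_k]] := boolP (N \subset Keven); first by left.
have [b odd_k] := odd_of_notin_Keven (subsetP sNK k Nk) notin_k.
by right; apply/properP; split; [exact: Keven_sub_of_odd odd_k | exists k].
Qed.

(* If [k] is odd on exactly one half, [k * k^(a_0)] is odd on both. *)
Lemma comm_a0_of_proper : Keven \proper N -> [~ a d 0, a d d.-1] \in N.
Proof.
case/properP => sKeN [k Nk notin_k].
have Kk := subsetP sNK k Nk; have Kc0 := comm_a_K d 0.
have [h Nh odd_h] : exists2 h, h \in N & forall b, parity h [:: b].
  have [/andP [odd_left odd1]|not_both] := boolP (parity k [:: false] && parity k [:: true]).
    by exists k => // -[].
  have Nk' : k ^ a d 0 \in N by rewrite (memJ_norm k (subsetP nNG _ (a_G d 0))).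
  exists (k * k ^ a d 0); first exact: groupM.
  move=> b.
  have [b0 odd_b0] := odd_of_notin_Keven Kk notin_k.
  rewrite parityM ?K_conj ?a_G // [a d 0]a_twist.
  rewrite (parityJ_twist d_gt0 Kk (swap_at_invariant _)) /=; last lia.
  move: not_both odd_b0; rewrite /swap_at /= addbT.
  by case: b0 b => [] []; case: (parity k [:: false]); case: (parity k [:: true]).
have Kh := subsetP sNK h Nh.
have hc0 : h * [~ a d 0, a d d.-1] \in N.
  apply: (subsetP sKeN); rewrite mem_Keven groupM //=.
  by rewrite !(parityM d_gt0 _ Kh Kc0) !odd_h !parity_comm_a0.
by rewrite -(mulKg h [~ a d 0, a d d.-1]) groupM ?groupV.
Qed.

Lemma comm_a_mem_iff :
  [~ a d 1, a d d.-1] \in N /\ [~ a d 0, a d d.-1] \notin N <-> N :=: Keven.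
Proof.
split=> [[Nc1 notNc0]|->]; last first.
  by rewrite !mem_Keven !comm_a_K !parity_comm_a0 !parity_comm_a1.
have [sNKe|/comm_a0_of_proper Nc0] := sub_Keven_or_proper; last by rewrite Nc0 in notNc0.
by apply/eqP; rewrite eqEsubset sNKe Keven_sub_of_comm_a1.
Qed.

Lemma index_four_iff : #|K d : N| = 4 <-> N :=: Keven.
Proof.
split=> [index_N|->]; last exact: index_Keven.
have sKeK : Keven \subset K d by apply/subsetP => x /dom_ker.
have card_N : #|N| = #|Keven|.
  apply/eqP; rewrite -(eqn_pmul2r (isT : 0 < 4)) -{1}index_N -index_Keven.
  by rewrite (Lagrange sNK) (Lagrange sKeK).
have [sNKe|ltKeN] := sub_Keven_or_proper.
  by apply/eqP; rewrite eqEcard sNKe -card_N leqnn.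
by move: (proper_card ltKeN); rewrite card_N ltnn.
Qed.

End InvariantSubgroup.

End LevelOneParities.

Lemma restr_in_G d (g : {perm word d}) : g \in G d ->
  exists2 r, r \in G d.-1 & forall w, r w = restr d.-1 g w.
Proof.
move=> Gg; have le_pred (w : word d.-1) : size (wval w) <= d.
  exact: leq_trans (size_wval w) (leq_pred d).
have wval_restr w : wval (restr d.-1 g w) = wval (g (mkw d (wval w))).
  by rewrite /restr wval_mkw // size_wval_G // wval_mkw ?le_pred ?size_wval.
have restr_inj : injective (restr d.-1 g).
  move=> w1 w2 /(congr1 (@wval _)); rewrite !wval_restr => /wval_inj /perm_inj.
  by move/mkw_inj => /(_ (le_pred w1) (le_pred w2)) /wval_inj.
exists (perm restr_inj) => [|w]; last by rewrite permE.
apply/inGP => w; apply: wval_inj; rewrite !permE wval_parent !wval_restr.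
have -> : mkw d (wval (wparent w)) = wparent (mkw d (wval w)).
  by apply: wval_inj; rewrite wval_mkw ?le_pred // !wval_parent wval_mkw ?le_pred.
by move/inGP: Gg => ->; rewrite wval_parent.
Qed.

Lemma mulPK_eq_G d (P : {group {perm word d}}) :
  P \subset G d -> pattern P d.-1 = G d.-1 -> P * K d = G d.
Proof.
move=> sPG patP; apply/eqP; rewrite eqEsubset mulG_subG sPG K_sub /=.
apply/subsetP => g Gg; have [r Gr r_restr] := restr_in_G Gg.
move: Gr; rewrite -patP inE => /existsP [p /andP [Pp /forallP p_restr]].
have Gp := subsetP sPG p Pp.
have le_pred (w : word d) : size (wval w) < d -> size (wval w) <= d.-1 by lia.
have agree u : size (wval u) < d -> g u = p u.
  move=> /le_pred lt_u; move/eqP: (p_restr (mkw d.-1 (wval u))); rewrite r_restr.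
  move/(congr1 (@wval _)); rewrite /restr !wval_mkw ?size_wval_G ?wval_mkw ?size_wval //.
  by rewrite !wvalK => /wval_inj.
rewrite -(mulKVg p g) mem_mulg //; apply/inKP; split; first by rewrite groupM ?groupV.
by move=> w lt_wd; rewrite permM agree ?size_wval_G ?groupV // -permM mulVg perm1.
Qed.

Lemma G_norm_KI d (P : {group {perm word d}}) :
  1 < d -> P \subset G d -> P * K d = G d -> G d \subset 'N(K d :&: P).
Proof.
move=> d_gt1 sPG defG; rewrite -defG mulG_subG; apply/andP; split.
  exact: normsI (subset_trans sPG (normal_norm (K_normal d))) (normG P).
exact: sub_abelian_norm (K_abelian (ltnW d_gt1)) (subsetIl _ _).
Qed.

Local Close Scope group_scope.

Theorem mainTheorem15 (d : nat) (P : {group {perm word d}}) :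
  2 <= d ->
  P \subset G d ->
  essential P ->
  pattern P d.-1 = G d.-1 ->
  (([~ a d 1, a d d.-1] \in P)%g /\ ([~ a d 0, a d d.-1] \notin P)%g)
  <-> #|G d : P|%g = 4.
Proof.
move=> d_gt1 sPG _ patP.
have defG := mulPK_eq_G sPG patP.
have nNG := G_norm_KI d_gt1 sPG defG.
have memP c : c \in K d -> (c \in P) = (c \in K d :&: P) by rewrite in_setI => ->.
rewrite !memP ?comm_a_K // -defG indexMg -indexgI.
exact: iff_trans (comm_a_mem_iff d_gt1 (subsetIl _ _) nNG)
                 (iff_sym (index_four_iff d_gt1 (subsetIl _ _) nNG)).
Qed.
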